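(* Let $\Delta$ be a simplicial forest. Then the greatest common divisor of the maximal minors of the incidence matrix of $\Delta$ is $1$.
   Context: A simplicial complex $\Delta$ is a collection of subsets (faces) of a finite vertex set closed under taking subsets; facets are maximal faces; write $\Delta=\langle F_1,\dots,F_s\rangle$ when $F_1,\dots,F_s$ are the facets. The incidence matrix of $\Delta=\langle F_1,\dots,F_s\rangle$ with vertices $v_1,\dots,v_n$ is the $s\times n$ matrix whose $(i,j)$ entry is $1$ if $v_j\in F_i$ and $0$ otherwise. A facet $F$ of $\Delta$ is a leaf if either $F$ is the only facet of $\Delta$, or there is a facet $G\neq F$ of $\Delta$ with $F\cap F'\subseteq F\cap G$ for every facet $F'\neq F$ of $\Delta$. $\Delta$ is a simplicial tree if $\Delta$ is connected and every subcomplex $\langle F_{i_1},\dots,F_{i_r}\rangle$ generated by a nonempty subset of the facets has a leaf; $\Delta$ is a simplicial forest if every connected component of $\Delta$ is a simplicial tree. *)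

From mathcomp Require Import all_boot all_order all_algebra.
Set Implicit Arguments. Unset Strict Implicit. Unset Printing Implicit Defensive.
Import GRing.Theory Num.Theory.
Local Open Scope ring_scope.

(* A simplicial complex on the vertex set 'I_n given by its facets
   F : 'I_s -> {set 'I_n} (facets indexed by 'I_s). *)

Definition facet_list (s n : nat) (F : 'I_s -> {set 'I_n}) : Prop :=
  (forall i j : 'I_s, i != j -> ~~ (F i \subset F j)) /\
  (forall v : 'I_n, exists i : 'I_s, v \in F i).

Definition is_leaf (s n : nat) (F : 'I_s -> {set 'I_n}) (I : {set 'I_s})
    (i : 'I_s) : Prop :=
  i \in I /\
  (I = [set i] \/
   exists2 j, (j \in I) && (j != i) &
     forall k, k \in I -> k != i -> F i :&: F k \subset F i :&: F j).

Definition facet_adj (s n : nat) (F : 'I_s -> {set 'I_n}) : rel 'I_s :=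
  fun i j => F i :&: F j != set0.

Definition sub_connected (s n : nat) (F : 'I_s -> {set 'I_n}) (I : {set 'I_s})
    : Prop :=
  forall i j, i \in I -> j \in I ->
    connect (fun a b => [&& a \in I, b \in I & facet_adj F a b]) i j.

Definition is_simplicial_tree (s n : nat) (F : 'I_s -> {set 'I_n})
    (I : {set 'I_s}) : Prop :=
  sub_connected F I /\
  forall J : {set 'I_s}, J \subset I -> J != set0 -> exists i, is_leaf F J i.

Definition facet_component (s n : nat) (F : 'I_s -> {set 'I_n}) (i : 'I_s)
    : {set 'I_s} := [set j | connect (facet_adj F) i j].

Definition is_simplicial_forest (s n : nat) (F : 'I_s -> {set 'I_n}) : Prop :=
  forall i : 'I_s, is_simplicial_tree F (facet_component F i).

Definition incidence_matrix (s n : nat) (F : 'I_s -> {set 'I_n}) : 'M[int]_(s, n) :=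
  \matrix_(i < s, j < n) ((j \in F i) : nat)%:R.

Definition strictly_increasing (k m : nat) (f : 'I_k -> 'I_m) : bool :=
  [forall i : 'I_k, forall j : 'I_k, (i < j)%N ==> (f i < f j)%N].

Definition gcd_maximal_minors (s n : nat) (M : 'M[int]_(s, n)) : int :=
  \big[gcdz/0%Z]_(f : {ffun 'I_(minn s n) -> 'I_s} | strictly_increasing f)
    \big[gcdz/0%Z]_(g : {ffun 'I_(minn s n) -> 'I_n} | strictly_increasing g)
      \det (mxsub f g M).

From mathcomp Require Import all_boot all_order all_algebra perm.
Set Implicit Arguments. Unset Strict Implicit. Unset Printing Implicit Defensive.
Import GRing.Theory Num.Theory.
Local Open Scope ring_scope.

(* Every nonempty family J of facets of a forest contains a facet with a vertex
   lying in no other facet of J: take a leaf of J inside one connected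
   component; a leaf is not contained in its branch, so it has a vertex outside
   the branch, hence outside every other facet of J.  Removing such facets one
   at a time chooses vertices v_i in F_i and a ranking of the facets such that
   v_i lies only in F_i and in facets of smaller rank.  The s x s minor on the
   columns v_1, ..., v_s is then a unitriangular matrix up to a permutation of
   its columns, so it is +1 or -1, and the maximal minors have gcd 1. *)

Definition gcd_minors (k s n : nat) (M : 'M[int]_(s, n)) : int :=
  \big[gcdz/0%Z]_(f : {ffun 'I_k -> 'I_s} | strictly_increasing f)
    \big[gcdz/0%Z]_(g : {ffun 'I_k -> 'I_n} | strictly_increasing g)
      \det (mxsub f g M).

Lemma gcd_maximal_minorsE s n (M : 'M[int]_(s, n)) :
  gcd_maximal_minors M = gcd_minors (minn s n) M.
Proof. by []. Qed.

Lemma biggcdzE (I : finType) (P : pred I) (G : I -> int) :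
  \big[gcdz/0%Z]_(i | P i) G i = (\big[gcdn/0%N]_(i | P i) `|G i|%N)%:Z.
Proof. by elim/big_rec2: _ => // i y _ _ ->. Qed.

Lemma biggcdz_eq1 (I : finType) (P : pred I) (G : I -> int) (i0 : I) :
  P i0 -> `|G i0|%N = 1%N -> \big[gcdz/0%Z]_(i | P i) G i = 1%Z.
Proof. by move=> Pi0 Gi0; rewrite biggcdzE (bigD1 i0) //= Gi0 gcd1n. Qed.

Lemma gcd_minors_eq1 k s n (M : 'M[int]_(s, n))
    (f0 : {ffun 'I_k -> 'I_s}) (g0 : {ffun 'I_k -> 'I_n}) :
  strictly_increasing f0 -> strictly_increasing g0 ->
  `|\det (mxsub f0 g0 M)|%N = 1%N -> gcd_minors k M = 1%Z.
Proof.
by move=> f0_inc g0_inc det1; apply: (biggcdz_eq1 f0_inc); rewrite (biggcdz_eq1 g0_inc det1).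
Qed.

Lemma gcd_minors0 s n (M : 'M[int]_(s, n)) : gcd_minors 0 M = 1%Z.
Proof.
apply: (@gcd_minors_eq1 _ _ _ _ [ffun i => widen_ord (leq0n s) i]
                                [ffun i => widen_ord (leq0n n) i]).
- by apply/forallP => -[].
- by apply/forallP => -[].
- by rewrite det_mx00.
Qed.

Lemma id_strictly_increasing k : strictly_increasing [ffun i : 'I_k => i].
Proof. by apply/forallP => i; apply/forallP => j; rewrite !ffunE; apply/implyP. Qed.

Lemma sorted_enum_ord_set n (A : {set 'I_n}) : sorted ltn (map val (enum A)).
Proof.
rewrite -[enum _](eq_filter (mem_enum _)) -(eq_filter (mem_map val_inj _)).
by rewrite -filter_map (sorted_filter ltn_trans) // unlock val_ord_enum iota_ltn_sorted.
Qed.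

Lemma increasing_enum_set n k (A : {set 'I_n}) : #|A| = k ->
  exists2 g : {ffun 'I_k -> 'I_n}, strictly_increasing g & codom g =i A.
Proof.
move=> <-; exists [ffun i => enum_val i].
  apply/forallP => i; apply/forallP => j; apply/implyP => lt_ij.
  have x0 : 'I_n := enum_val i.
  rewrite !ffunE !(enum_val_nth x0) -!(nth_map x0 0%N) -?cardE //.
  apply: (sorted_ltn_nth ltn_trans) (sorted_enum_ord_set A) _ _ _ _ lt_ij;
    by rewrite inE size_map -cardE.
move=> x; apply/codomP/idP => [[i ->] | Ax]; first by rewrite ffunE enum_valP.
by exists (enum_rank_in Ax x); rewrite ffunE enum_rankK_in.
Qed.

Lemma rank_nondecreasing_id (T : finType) (t : T -> T) (r : T -> nat) :
  injective t -> injective r -> (forall i, (r i <= r (t i))%N) -> t =1 id.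
Proof.
move=> t_inj r_inj r_le i; apply: r_inj; apply/esym/eqP; move: i; apply/forallP.
have [_ <-] := @leqif_sum _ predT _ r (r \o t) (fun j _ => leqif_eq (r_le j)).
by rewrite [X in X == _](reindex_inj t_inj).
Qed.

Lemma det_rank_unitriangular (R : comPzRingType) m (B : 'M[R]_m) (q : {perm 'I_m})
    (r : 'I_m -> nat) :
  injective r -> (forall i, B i (q i) = 1) ->
  (forall i j, B j (q i) != 0 -> (r j <= r i)%N) -> \det B = (-1) ^+ q.
Proof.
move=> r_inj B_diag B_rank; rewrite /determinant (bigD1 q) //= big1 ?mulr1 //.
rewrite big1 ?addr0 // => p p_neq_q.
have [i /eqP Bi0 | B_nz] := pickP (fun i => B i (p i) == 0).
  by rewrite (bigD1 i) //= Bi0 mul0r mulr0.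
case/eqP: p_neq_q; apply/permP => i.
pose t j := (q^-1)%g (p j).
have t_inj : injective t by move=> j k /perm_inj /perm_inj.
have t_id : t =1 id.
  apply: rank_nondecreasing_id t_inj r_inj _ => j.
  by apply: B_rank; rewrite /t permKV B_nz.
by rewrite -[p i](permKV q) -/(t i) t_id.
Qed.

Section FacetFamilies.

Variables (s n : nat) (F : 'I_s -> {set 'I_n}).

Definition has_free_vertices : Prop :=
  forall J : {set 'I_s}, J != set0 ->
  exists i x, [/\ i \in J, x \in F i & forall k, k \in J -> k != i -> x \notin F k].

Lemma facet_list_neq0 (x0 : 'I_n) : facet_list F -> forall i, F i != set0.
Proof.
move=> [incomparable covering] i; apply/set0Pn.
have [k Fk_x0] := covering x0.
have [-> | ik] := eqVneq i k; first by exists x0.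
by have /subsetPn [x Fi_x _] := incomparable i k ik; exists x.
Qed.

Lemma leaf_free_vertex (I : {set 'I_s}) i :
  (forall i j, i != j -> ~~ (F i \subset F j)) -> (forall i, F i != set0) ->
  is_leaf F I i -> exists2 x, x \in F i & forall k, k \in I -> k != i -> x \notin F k.
Proof.
move=> incomparable nonempty [_ [I_i | [j /andP [jI ji] branch]]].
  have /set0Pn [x Fi_x] := nonempty i.
  by exists x => // k; rewrite I_i inE => /eqP ->; rewrite eqxx.
have /subsetPn [x Fi_x Fj_x] : ~~ (F i \subset F j) by rewrite incomparable // eq_sym.
exists x => // k kI ki; apply: contra Fj_x => Fk_x.
by have /subsetP/(_ x) := branch k kI ki; rewrite !inE Fi_x Fk_x => /(_ isT)/andP [].
Qed.

Lemma facet_component_shared c i k x :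
  i \in facet_component F c -> x \in F i -> x \in F k -> k \in facet_component F c.
Proof.
rewrite !inE => ci Fi_x Fk_x; apply: connect_trans ci (connect1 _).
by apply/set0Pn; exists x; rewrite inE Fi_x Fk_x.
Qed.

Lemma forest_has_free_vertices :
  facet_list F -> is_simplicial_forest F -> (forall i, F i != set0) ->
  has_free_vertices.
Proof.
move=> [incomparable _] forest nonempty J /set0Pn [c Jc].
set C := facet_component F c.
have Cc : c \in C by rewrite inE connect0.
have [_ /(_ (J :&: C) (subsetIr _ _)) [|i leaf_i]] := forest c.
  by apply/set0Pn; exists c; rewrite inE Jc Cc.
have /setIP [Ji Ci] := leaf_i.1.
have [x Fi_x free_x] := leaf_free_vertex incomparable nonempty leaf_i.
exists i, x; split=> // k Jk ki; apply: contraT => /negbNE Fk_x.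
by have := free_x k; rewrite inE Jk (facet_component_shared Ci Fi_x Fk_x) ki Fk_x => /(_ isT isT).
Qed.

Definition free_vertex_ranking (J : {set 'I_s}) (v : 'I_s -> 'I_n) (r : 'I_s -> nat)
    : Prop :=
  [/\ {in J, forall i, v i \in F i}, {in J &, injective r} &
      {in J &, forall i j, v i \in F j -> (r j <= r i)%N}].

Lemma exists_free_vertex_ranking (x0 : 'I_n) : has_free_vertices ->
  forall J, exists v r, free_vertex_ranking J v r.
Proof.
move=> free J; have [m] := ubnP #|J|; elim: m J => // m IH J J_m.
have [-> | /free [i0 [x [Ji0 Fi0_x free_x]]]] := eqVneq J set0.
  by exists (fun _ => x0), (fun _ => 0%N); split=> i; rewrite inE.
have [|v [r [vF r_inj v_r]]] := IH (J :\ i0).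
  by rewrite -ltnS (leq_trans _ J_m) // ltnS (cardsD1 i0 J) Ji0.
exists (fun k => if k == i0 then x else v k).
exists (fun k => if k == i0 then 0%N else (r k).+1).
have J'_i k : k \in J -> k != i0 -> k \in J :\ i0 by rewrite !inE => -> ->.
split.
- by move=> i Ji; case: eqVneq => [-> // | i_i0]; apply/vF/J'_i.
- move=> a b Ja Jb /=; case: (eqVneq a i0) => [-> | a_i0];
    case: (eqVneq b i0) => [-> | b_i0] //.
  by move=> [] /r_inj; apply; apply: J'_i.
- move=> i j Ji Jj /=; case: (eqVneq j i0) => [// | j_i0].
  case: (eqVneq i i0) => [_ Fj_x | i_i0 Fj_vi].
    by have := free_x j Jj j_i0; rewrite Fj_x.
  by rewrite ltnS v_r ?J'_i.
Qed.

Lemma free_vertex_ranking_inj v r : free_vertex_ranking setT v r -> injective v.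
Proof.
move=> [vF r_inj v_r] i j vij; apply: r_inj; rewrite ?inE //.
have Fi_vj : v j \in F i by rewrite -vij vF ?inE.
have Fj_vi : v i \in F j by rewrite vij vF ?inE.
by apply/eqP; rewrite eqn_leq !v_r ?inE.
Qed.

Lemma free_vertex_ranking_unit_minor v r : free_vertex_ranking setT v r ->
  exists2 g : {ffun 'I_s -> 'I_n}, strictly_increasing g &
    `|\det (mxsub [ffun i => i] g (incidence_matrix F))|%N = 1%N.
Proof.
move=> ranking; have v_inj := free_vertex_ranking_inj ranking.
have [vF r_inj v_r] := ranking.
have card_v : #|v @: setT| = s by rewrite card_imset // cardsT card_ord.
have [g g_inc g_v] := increasing_enum_set card_v.
exists g => //.
have v_g i : v i \in codom g by rewrite g_v imset_f ?inE.
pose q i := iinv (v_g i).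
have g_q i : g (q i) = v i := f_iinv (v_g i).
have q_inj : injective q by move=> i j /(congr1 g); rewrite !g_q => /v_inj.
rewrite (@det_rank_unitriangular _ _ _ (perm q_inj) r).
- by case: odd_perm.
- by move=> i j; apply: r_inj; rewrite inE.
- by move=> i; rewrite !mxE permE !ffunE g_q vF ?inE.
- move=> i j; rewrite !mxE permE !ffunE g_q.
  by case: (boolP (v i \in F j)) => // Fj_vi _; apply: v_r; rewrite ?inE.
Qed.

End FacetFamilies.

Theorem proposition2p6 (s n : nat) (F : 'I_s -> {set 'I_n}) :
  facet_list F -> is_simplicial_forest F ->
  gcd_maximal_minors (incidence_matrix F) = 1.
Proof.
move=> facets forest; rewrite gcd_maximal_minorsE.
have [-> | minn_gt0] := posnP (minn s n); first exact: gcd_minors0.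
have x0 : 'I_n := Ordinal (leq_trans minn_gt0 (geq_minr s n)).
have free := forest_has_free_vertices facets forest (facet_list_neq0 x0 facets).
have [v [r ranking]] := exists_free_vertex_ranking x0 free setT.
have s_le_n : (s <= n)%N.
  by have := leq_card v (free_vertex_ranking_inj ranking); rewrite !card_ord.
have [g g_inc det_g] := free_vertex_ranking_unit_minor ranking.
by rewrite (minn_idPl s_le_n); apply: gcd_minors_eq1 (id_strictly_increasing s) g_inc det_g.
Qed.
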